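(* In every execution of the Minimmit protocol (described in the context), if a block $b$ receives an L-notarization, then no block $b'\neq b$ with $b'.\text{view}=b.\text{view}$ receives an M-notarization.
   Context: Setting. There are $n$ processors $\Pi=\{p_0,\dots,p_{n-1}\}$ and an integer $f$ with $5f+1\le n$. At most $f$ processors may be corrupted by an adversary during the execution and then behave arbitrarily (Byzantine); processors never corrupted are called correct. Processors communicate over point-to-point authenticated channels; every message is signed by its sender; a PKI validates signatures and $H$ is a collision-resistant hash function; attention is restricted to executions in which the adversary cannot forge signatures or find hash collisions. Time is divided into timeslots $t\in\mathbb{N}_{\ge 0}$ (partial synchrony): a message sent at time $t$ arrives at some time $t'>t$ with $t'\le \max\{\text{GST},t\}+\Delta$, where $\Delta$ is known to the protocol and GST is unknown and chosen by the adversary (who also chooses delivery times subject to this constraint). Clocks of correct processors advance in real time. When a correct processor sends a message to all processors, it regards that message as immediately received by itself. Transactions are unique messages signed by the environment; each timeslot each processor may receive a finite set of transactions. Each processor $p_i$ maintains an append-only log $\text{log}_i$ of distinct transactions, $\text{log}_i(t)$ denoting its value at the end of timeslot $t$. Blocks. $\text{lead}(v):=p_j$ with $j=v \bmod n$. The genesis block is $b_{\text{gen}}=(0,\lambda,\lambda)$ ($\lambda$ the empty sequence). Any other block is a tuple $b=(v,\text{Tr},h)$ signed by $\text{lead}(v)$, with $v\in\mathbb{N}_{\ge1}$ ($b.\text{view}=v$, ''a view $v$ block''), $\text{Tr}=b.\text{Tr}$ a sequence of distinct transactions, and $h=b.h$ a hash value; its parent is the block $b'$ with $H(b')=h$. The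 ancestors of $b$ are $b$ and the ancestors of its parent ($b_{\text{gen}}$ has only itself). Two blocks are inconsistent if neither is an ancestor of the other. To finalise $b$ means: upon obtaining all ancestors of $b$, the processor sets its log to extend the concatenation of $b'.\text{Tr}$ over ancestors $b'$ of $b$ (with duplicates removed). Messages. A vote for $b$ is $(\text{vote},b)$. An M-notarization for $b$ is a set of $2f+1$ votes for $b$ signed by distinct processors; an L-notarization for $b$ is a set of $n-f$ votes for $b$ signed by distinct processors. A nullify$(v)$ message is $(\text{nullify},v)$; a nullification for view $v$ is a set of $2f+1$ nullify$(v)$ messages signed by distinct processors. In the claim, a block $b$ ''receives an M-notarization'' if $b=b_{\text{gen}}$ or at least $2f+1$ processors send votes for $b$; $b$ ''receives an L-notarization'' if $b=b_{\text{gen}}$ or at least $n-f$ processors send votes for $b$; view $v$ ''receives a nullification'' if at least $2f+1$ processors send nullify$(v)$ messages. Local state of each processor: $\mathtt{S}$, the set of all received messages (automatically updated; it contains a block $b$ if it contains any message having $b$ as an entry; initially it contains only $b_{\text{gen}}$ and an M- and L-notarization for $b_{\text{gen}}$); the current view $\mathtt{v}$ (initially 1; a processor enters view $v$ when $\mathtt{v}$ becomes $v$); a timer $\mathtt{T}$ (initially 0, increasing in real time, reset to 0 upon entering a new view); $\mathtt{nullified}$ (initially false) and $\mathtt{notarized}$ (initially $\bot$, a value different from every block). SelectParent$(\mathtt{S},\mathtt{v})$: let $v'<\mathtt{v}$ be greatest such that $\mathtt{S}$ contains an M-notarization for some block of view $v'$; output the lexicographically least such block. ProposeChild$(b,v)$: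 form a sequence Tr of distinct transactions containing all transactions received and not in $b'.\text{Tr}$ for any ancestor $b'\in\mathtt{S}$ of $b$, and send the block $(v,\text{Tr},H(b))$ to all processors. $\mathtt{S}$ contains a valid proposal $b$ for view $v$ if $\mathtt{S}$ contains (i) precisely one block of the form $b=(v,\text{Tr},h)$ signed by $\text{lead}(v)$, (ii) an M-notarization for some $b'$ with $H(b')=h$, say $b'.\text{view}=v'$, and (iii) a nullification for each view in the open interval $(v',v)$. At timeslot $t$ a nullification $N\subseteq\mathtt{S}$ for a view $v$ is new if $\mathtt{S}$ contained no nullification for $v$ at any earlier timeslot and $N$ is lexicographically least among nullifications for $v$ in $\mathtt{S}$; new M-notarizations and new L-notarizations for a block $b$ are defined analogously. Protocol (Minimmit): at every timeslot, correct $p_i$ does, in order: (1) send new nullifications in $\mathtt{S}$ to all processors; (2) send new M- and L-notarizations in $\mathtt{S}$ to all; (3) if $p_i=\text{lead}(\mathtt{v})$, execute ProposeChild(SelectParent$(\mathtt{S},\mathtt{v}),\mathtt{v})$; (4) if $\mathtt{S}$ contains a valid proposal $b$ for view $\mathtt{v}$ and $\mathtt{notarized}=\bot$ and $\mathtt{nullified}=$ false, set $\mathtt{notarized}:=b$ and send $(\text{vote},b)$ to all; (5) if $\mathtt{T}=2\Delta$, $\mathtt{nullified}=$ false and $\mathtt{notarized}=\bot$, set $\mathtt{nullified}:=$ true and send $(\text{nullify},\mathtt{v})$ to all; (6) if $\mathtt{S}$ contains a nullification for $\mathtt{v}$, set $\mathtt{v}:=\mathtt{v}+1$, $\mathtt{nullified}:=$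 false, $\mathtt{notarized}:=\bot$; (7) if $\mathtt{S}$ contains an M-notarization for some $b$ with $b.\text{view}=\mathtt{v}$: if $\mathtt{notarized}=\bot$ and $\mathtt{nullified}=$ false send $(\text{vote},b)$ to all; then set $\mathtt{v}:=\mathtt{v}+1$, $\mathtt{nullified}:=$ false, $\mathtt{notarized}:=\bot$; (8) if $\mathtt{nullified}=$ false, $\mathtt{notarized}\neq\bot$, and $\mathtt{S}$ contains at least $2f+1$ messages signed by distinct processors, each either $(\text{nullify},\mathtt{v})$ or $(\text{vote},b)$ for some $b$ with $b.\text{view}=\mathtt{v}$ and $b\ne\mathtt{notarized}$, then set $\mathtt{nullified}:=$ true and send $(\text{nullify},\mathtt{v})$ to all; (9) if $\mathtt{S}$ contains a new L-notarization for a block $b$, finalise $b$. *)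

From mathcomp Require Import all_boot.

Set Implicit Arguments.
Unset Strict Implicit.
Unset Printing Implicit Defensive.

Section Minimmit.

(* n processors p_0..p_{n-1} ('I_n), fault bound f, delay bound Delta,
   transactions Tx, hash values Hash with the empty sequence hnil (lambda). *)
Variables (n f Delta : nat) (Tx Hash : eqType) (hnil : Hash).

Definition block := (nat * seq Tx * Hash)%type.
Definition bview (b : block) : nat := b.1.1.
Definition bTr (b : block) : seq Tx := b.1.2.
Definition bh (b : block) : Hash := b.2.
Definition genesis : block := (0, [::], hnil).

Variable H : block -> Hash.

Definition is_lead (p : 'I_n) (v : nat) : bool := (p : nat) == v %% n.

Inductive anc : block -> block -> Prop :=
| anc_self b : anc b b
| anc_parent b c a : b != genesis -> H c = bh b -> anc c a -> anc b a.

Definition payload := (block + block + nat)%type.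
Definition PBlock (b : block) : payload := inl (inl b).
Definition PVote (b : block) : payload := inl (inr b).
Definition PNull (v : nat) : payload := inr v.

(* a signed message: (signer, content) *)
Definition atom := ('I_n * payload)%type.
(* what is transmitted over a channel: a single signed message, or an
   aggregate (a nullification / M- / L-notarization = set of signed messages) *)
Definition msg := seq atom.

Definition payload_blocks (x : payload) : seq block :=
  match x with inl (inl b) => [:: b] | inl (inr b) => [:: b] | inr _ => [::] end.
Definition atom_blocks (a : atom) : seq block := payload_blocks a.2.

(* blocks contained in S (S always contains b_gen) *)
Definition blocks_of (S : seq atom) : seq block :=
  genesis :: flatten (map atom_blocks S).

Definition voters (S : seq atom) (b : block) : {set 'I_n} :=
  [set q | (q, PVote b) \in S].
Definition nullifiers (S : seq atom) (v : nat) : {set 'I_n} :=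
  [set q | (q, PNull v) \in S].

Definition hasM (S : seq atom) (b : block) : bool :=
  (b == genesis) || (2 * f + 1 <= #|voters S b|).
Definition hasL (S : seq atom) (b : block) : bool :=
  (b == genesis) || (n - f <= #|voters S b|).
Definition hasNull (S : seq atom) (v : nat) : bool :=
  2 * f + 1 <= #|nullifiers S v|.

Definition is_nullification (v : nat) (m : msg) : bool :=
  [&& size m == 2 * f + 1, uniq (map fst m) & all (fun a => a.2 == PNull v) m].
Definition is_vote_set (k : nat) (b : block) (m : msg) : bool :=
  [&& size m == k, uniq (map fst m) & all (fun a => a.2 == PVote b) m].

(* local state: S, v, time at which the current view was entered (so the
   timer is T = t - entry at timeslot t), nullified, notarized (None = bot) *)
Record lstate := LS {
  lS : seq atom;
  lv : nat;
  lentry : nat;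
  lnullified : bool;
  lnotarized : option block }.

Definition init_state : lstate := LS [::] 1 0 false None.

(* configuration within a timeslot: local state and messages sent so far *)
Definition config := (lstate * seq msg)%type.

(* sending m to all processors: recorded in the outbox and, being regarded as
   immediately received by the sender, added to S *)
Definition send (m : msg) (c : config) : config :=
  let: (s, ob) := c in
  (LS (lS s ++ m) (lv s) (lentry s) (lnullified s) (lnotarized s), rcons ob m).
Definition sends (ms : seq msg) (c : config) : config :=
  foldl (fun c m => send m c) c ms.

Definition set_notarized (b : block) (c : config) : config :=
  let: (s, ob) := c in
  (LS (lS s) (lv s) (lentry s) (lnullified s) (Some b), ob).
Definition set_nullified (c : config) : config :=
  let: (s, ob) := c in
  (LS (lS s) (lv s) (lentry s) true (lnotarized s), ob).
Definition advance (t : nat) (c : config) : config :=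
  let: (s, ob) := c in
  (LS (lS s) (lv s).+1 t false None, ob).

Definition select_parent (S : seq atom) (v : nat) (b : block) : Prop :=
  [/\ hasM S b, bview b < v &
      forall b2, hasM S b2 -> bview b2 < v -> bview b2 <= bview b].

(* Tr is a legal transaction sequence for ProposeChild(b, v), where txs are
   all transactions received so far *)
Definition propose_tr (S : seq atom) (txs : seq Tx) (b : block) (Tr : seq Tx) : Prop :=
  uniq Tr /\
  forall x, x \in txs ->
    (forall a, anc b a -> a \in blocks_of S -> x \notin bTr a) -> x \in Tr.

Definition valid_proposal (S : seq atom) (v : nat) (b : block) : Prop :=
  [/\ bview b = v, b \in blocks_of S,
      (forall b2, b2 \in blocks_of S -> bview b2 = v -> b2 = b) &
      exists b', [/\ hasM S b', H b' = bh b &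
                     forall w, bview b' < w < v -> hasNull S w]].

Definition conflicting (v : nat) (nb : option block) (x : payload) : bool :=
  match x with
  | inr w => w == v
  | inl (inr b) => (bview b == v) && (Some b != nb)
  | inl (inl _) => false
  end.
Definition conflict_set (S : seq atom) (v : nat) (nb : option block) : {set 'I_n} :=
  [set q | has (fun a : atom => (a.1 == q) && conflicting v nb a.2) S].

(* ---------- the nine steps (step 9 only affects the log, not modelled) ---------- *)

(* (1) send new nullifications; Sprev = S at the end of the previous timeslot *)
Definition step1 (Sprev : seq atom) (c c' : config) : Prop :=
  exists (vs : seq nat) (N : nat -> msg),
    [/\ uniq vs,
        (forall v, v \in vs = hasNull (lS c.1) v && ~~ hasNull Sprev v),
        (forall v, v \in vs -> is_nullification v (N v) /\ {subset N v <= lS c.1}) &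
        c' = sends (map N vs) c].

Definition step2 (Sprev : seq atom) (c c' : config) : Prop :=
  exists (bsM bsL : seq block) (NM NL : block -> msg),
    [/\ uniq bsM /\ uniq bsL,
        (forall b, b \in bsM =
           [&& b != genesis, hasM (lS c.1) b & ~~ hasM Sprev b]),
        (forall b, b \in bsL =
           [&& b != genesis, hasL (lS c.1) b & ~~ hasL Sprev b]),
        (forall b, b \in bsM ->
           is_vote_set (2 * f + 1) b (NM b) /\ {subset NM b <= lS c.1}) /\
        (forall b, b \in bsL ->
           is_vote_set (n - f) b (NL b) /\ {subset NL b <= lS c.1}) &
        c' = sends (map NM bsM ++ map NL bsL) c].

Definition step3 (p : 'I_n) (txs : seq Tx) (c c' : config) : Prop :=
  let s := c.1 in
  if is_lead p (lv s) then
    exists b Tr, [/\ select_parent (lS s) (lv s) b,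
                     propose_tr (lS s) txs b Tr &
                     c' = send [:: (p, PBlock (lv s, Tr, H b))] c]
  else c' = c.

Definition step4 (p : 'I_n) (c c' : config) : Prop :=
  let s := c.1 in
  (exists b, [/\ valid_proposal (lS s) (lv s) b, lnotarized s = None,
                 lnullified s = false &
                 c' = send [:: (p, PVote b)] (set_notarized b c)])
  \/
  ((forall b, ~ valid_proposal (lS s) (lv s) b) \/ lnotarized s <> None
     \/ lnullified s = true) /\ c' = c.

Definition step5 (p : 'I_n) (t : nat) (c c' : config) : Prop :=
  let s := c.1 in
  if [&& t - lentry s == 2 * Delta, ~~ lnullified s & lnotarized s == None]
  then c' = send [:: (p, PNull (lv s))] (set_nullified c)
  else c' = c.

Definition step6 (t : nat) (c c' : config) : Prop :=
  let s := c.1 in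
  if hasNull (lS s) (lv s) then c' = advance t c else c' = c.

Definition step7 (p : 'I_n) (t : nat) (c c' : config) : Prop :=
  let s := c.1 in
  (exists b, [/\ hasM (lS s) b, bview b = lv s &
     c' = advance t (if (lnotarized s == None) && ~~ lnullified s
                     then send [:: (p, PVote b)] c else c)])
  \/
  ((forall b, ~ (hasM (lS s) b /\ bview b = lv s)) /\ c' = c).

Definition step8 (p : 'I_n) (c c' : config) : Prop :=
  let s := c.1 in
  if [&& ~~ lnullified s, lnotarized s != None &
         2 * f + 1 <= #|conflict_set (lS s) (lv s) (lnotarized s)|]
  then c' = send [:: (p, PNull (lv s))] (set_nullified c)
  else c' = c.

Definition timeslot (p : 'I_n) (t : nat) (Sprev : seq atom) (txs : seq Tx)
    (c0 c8 : config) : Prop :=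
  exists c1 c2 c3 c4 c5 c6 c7,
    [/\ step1 Sprev c0 c1, step2 Sprev c1 c2, step3 p txs c2 c3 & step4 p c3 c4]
    /\ [/\ step5 p t c4 c5, step6 t c5 c6, step7 p t c6 c7 & step8 p c7 c8].

Record execution := Exec {
  correct : 'I_n -> bool;                     (* never corrupted *)
  GST : nat;
  rx : 'I_n -> nat -> seq Tx;                 (* transactions received at a timeslot *)
  out : 'I_n -> 'I_n -> nat -> seq msg;       (* messages sent by p to q at timeslot t *)
  arr : 'I_n -> 'I_n -> nat -> msg -> nat;    (* arrival time chosen by the adversary *)
  st : 'I_n -> nat -> lstate                  (* local state at the end of timeslot t *)
}.

Variable E : execution.

Definition inbox (p : 'I_n) (t : nat) : seq atom :=
  flatten [seq flatten [seq flatten [seq m | m <- out E q p t0 & arr E q p t0 m <= t]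
                       | t0 <- iota 0 t]
          | q <- enum 'I_n & q != p].

Definition rx_upto (p : 'I_n) (t : nat) : seq Tx :=
  flatten [seq rx E p t0 | t0 <- iota 0 t.+1].

Definition prev_state (p : 'I_n) (t : nat) : lstate :=
  if t is t'.+1 then st E p t' else init_state.

Definition start_state (p : 'I_n) (t : nat) : lstate :=
  let s := prev_state p t in
  LS (lS s ++ inbox p t) (lv s) (lentry s) (lnullified s) (lnotarized s).

Definition appears (b : block) : Prop :=
  b = genesis \/
  exists p q t m a, [/\ m \in out E p q t, a \in m & b \in atom_blocks a].

Definition minimmit_execution : Prop :=
  [/\
      #|[set p | ~~ correct E p]| <= f,
      (forall p t, correct E p ->
         exists ob, timeslot p t (lS (prev_state p t)) (rx_upto p t)
                             (start_state p t, [::]) (st E p t, ob)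
                    /\ forall q, out E p q t = ob),
      (forall p q t m, p != q -> m \in out E p q t ->
         t < arr E p q t m <= maxn (GST E) t + Delta),
      (* signatures of correct processors cannot be forged *)
      (forall p q t m a, m \in out E p q t -> a \in m -> correct E a.1 ->
         exists q' t' m', [/\ t' <= t, m' \in out E a.1 q' t' & a \in m']) &
      (* every non-genesis block is signed by lead(view); unforgeable *)
      (forall p q t m a b (l : 'I_n), m \in out E p q t -> a \in m ->
         b \in atom_blocks a -> b != genesis -> is_lead l (bview b) ->
         correct E l ->
         exists q' t' m', [/\ t' <= t, m' \in out E l q' t' & (l, PBlock b) \in m']) /\
      (forall b, appears b -> b = genesis \/ (0 < bview b /\ uniq (bTr b))) /\
      (forall b1 b2, appears b1 -> appears b2 -> H b1 = H b2 -> b1 = b2)].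

Definition sends_vote (q : 'I_n) (b : block) : Prop :=
  exists r t m, m \in out E q r t /\ (q, PVote b) \in m.

Definition receives_M (b : block) : Prop :=
  b = genesis \/
  exists A : {set 'I_n}, 2 * f + 1 <= #|A| /\ forall q, q \in A -> sends_vote q b.

Definition receives_L (b : block) : Prop :=
  b = genesis \/
  exists A : {set 'I_n}, n - f <= #|A| /\ forall q, q \in A -> sends_vote q b.

End Minimmit.

(** A correct processor votes only for blocks of its current view, which is at
   least 1, and only while [notarized = ⊥]; voting sets [notarized], and the
   view only ever grows.  Since every message it sends is also added to its
   own [S], its votes at any time are recorded there, and at most one of them
   is for each view.  An L-notarization for [b] and an M-notarization for [b']
   have at least (n - f) + (2f + 1) > n + f voters in total, so some correct
   processor voted for both, hence [b = b'].  A genesis block cannot compete,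
   since any block with an M-notarization other than genesis was voted for by
   a correct processor and so has view at least 1. *)

From mathcomp Require Import all_boot.
From mathcomp Require Import zify.

Set Implicit Arguments.
Unset Strict Implicit.
Unset Printing Implicit Defensive.

Lemma card_gt_exists_notin (T : finType) (A B : {set T}) :
  #|B| < #|A| -> exists2 x, x \in A & x \notin B.
Proof.
move=> ltBA; apply/subsetPn; apply: contraTN ltBA => /subset_leq_card.
by rewrite leqNgt.
Qed.

Lemma card_setI_gt (T : finType) (A B : {set T}) k :
  #|T| + k < #|A| + #|B| -> k < #|A :&: B|.
Proof. by rewrite -cardsUI; have := max_card (A :|: B); lia. Qed.

Section OwnVotes.
Variables (n f Delta : nat) (Tx Hash : eqType) (hnil : Hash).
Variable H : block Tx Hash -> Hash.
Variable p : 'I_n.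

Definition own_votes_inv (s : lstate n Tx Hash) : Prop :=
  [/\ 0 < lv s,
      forall b, (p, PVote b) \in lS s -> 0 < bview b /\
        (bview b < lv s \/ (bview b = lv s /\ lnotarized s = Some b)) &
      forall b1 b2, (p, PVote b1) \in lS s -> (p, PVote b2) \in lS s ->
        bview b1 = bview b2 -> b1 = b2].

Definition config_inv (c : config n Tx Hash) : Prop :=
  own_votes_inv c.1 /\ forall m, m \in c.2 -> {subset m <= lS c.1}.

Definition preserves (c c' : config n Tx Hash) : Prop :=
  config_inv c -> config_inv c' /\ {subset lS c.1 <= lS c'.1}.

Lemma preserves_refl c : preserves c c.
Proof. by split. Qed.

Lemma preserves_trans c1 c2 c3 :
  preserves c1 c2 -> preserves c2 c3 -> preserves c1 c3.
Proof.
move=> h12 h23 /h12 [/h23 [inv3 sub23] sub12]; split=> // x /sub12; exact: sub23.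
Qed.

Lemma own_votes_inv_cat s m : own_votes_inv s ->
  (forall b, (p, PVote b) \in m -> (p, PVote b) \in lS s) ->
  own_votes_inv (LS (lS s ++ m) (lv s) (lentry s) (lnullified s) (lnotarized s)).
Proof.
case=> lv_gt0 votes_view votes_uniq old_votes; split=> //= [b|b1 b2].
  by rewrite mem_cat => /orP[|/old_votes]; apply: votes_view.
by rewrite !mem_cat => /orP[|/old_votes] vb1 /orP[|/old_votes] vb2; apply: votes_uniq.
Qed.

Lemma outbox_rcons_sub (ob : seq (msg n Tx Hash)) S m :
  (forall m0, m0 \in ob -> {subset m0 <= S}) ->
  forall m0, m0 \in rcons ob m -> {subset m0 <= S ++ m}.
Proof.
move=> ob_sub m0; rewrite mem_rcons inE => /orP[/eqP-> x|/ob_sub sub x /sub] xm;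
  by rewrite mem_cat xm ?orbT.
Qed.

Lemma preserves_send m c :
  (forall b, (p, PVote b) \in m -> (p, PVote b) \in lS c.1) ->
  preserves c (send m c).
Proof.
case: c => s ob /= old_votes [inv_s ob_sub]; split=> [|x /= xs]; last first.
  by rewrite mem_cat xs.
by split; [apply: own_votes_inv_cat | apply: outbox_rcons_sub].
Qed.

Lemma preserves_sends (ms : seq (msg n Tx Hash)) c :
  (forall m, m \in ms -> {subset m <= lS c.1}) -> preserves c (sends ms c).
Proof.
elim: ms c => [|m ms IH] c ms_sub /=; first exact: preserves_refl.
apply: (@preserves_trans _ (send m c)).
  by apply: preserves_send => b; apply: (ms_sub m); rewrite inE eqxx.
apply: IH => m0 m0ms x xm0; case: c ms_sub => s ob /= ms_sub.
by rewrite mem_cat (ms_sub m0) // inE m0ms orbT.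
Qed.

Lemma preserves_send_other (x : atom n Tx Hash) c :
  (forall b, x != (p, PVote b)) -> preserves c (send [:: x] c).
Proof.
move=> x_novote; apply: preserves_send => b; rewrite inE eq_sym => /eqP eq_x.
by have := x_novote b; rewrite eq_x eqxx.
Qed.

Lemma preserves_nullify v c :
  preserves c (send [:: (p, PNull Tx Hash v)] (set_nullified c)).
Proof.
apply: (@preserves_trans _ (set_nullified c)).
  by case: c => s ob; apply: preserves_refl.
by apply: preserves_send_other => b; apply/eqP => -[].
Qed.

Lemma preserves_advance t c : preserves c (advance t c).
Proof.
case: c => [[S v e nl nt] ob] [[lv_gt0 votes_view votes_uniq] ob_sub] /=.
split=> //; split=> //; split=> //= b /votes_view [vb_gt0 vb_le]; split=> //.
by left; case: vb_le => [|[]] /=; lia.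
Qed.

Lemma preserves_vote b c : lnotarized c.1 = None -> bview b = lv c.1 ->
  preserves c (send [:: (p, PVote b)] (set_notarized b c)).
Proof.
case: c => [[S v e nl nt] ob] /= nt_none vb [[lv_gt0 votes_view votes_uniq] ob_sub].
subst nt; split; last by move=> x /= xS; rewrite mem_cat xS.
have old_lt : forall b0, (p, PVote b0) \in S -> bview b0 < v.
  by move=> b0 /votes_view [_ [|[_ //]]].
split; last exact: outbox_rcons_sub.
split=> //= [b0|b1 b2].
  rewrite mem_cat inE => /orP[vb0|/eqP[->]]; last by rewrite vb; split=> //; right.
  by have [vb0_gt0 _] := votes_view _ vb0; split=> //; left; apply: old_lt.
rewrite !mem_cat !inE => /orP[vb1|/eqP[->]] /orP[vb2|/eqP[->]] //.
- exact: votes_uniq.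
- by have := old_lt _ vb1; lia.
- by have := old_lt _ vb2; lia.
Qed.

Lemma preserves_vote_advance b t c : lnotarized c.1 = None -> bview b = lv c.1 ->
  preserves c (advance t (send [:: (p, PVote b)] c)).
Proof.
move=> nt_none vb.
(* [advance] resets [notarized], so recording the vote there first is harmless. *)
have -> : advance t (send [:: (p, PVote b)] c) =
          advance t (send [:: (p, PVote b)] (set_notarized b c)) by case: c {nt_none vb}.
apply: preserves_trans; [exact: preserves_vote nt_none vb | exact: preserves_advance].
Qed.

Lemma preserves_step1 Sprev c c' : step1 f Sprev c c' -> preserves c c'.
Proof.
case=> vs [N [_ _ N_ok ->]]; apply: preserves_sends => m /mapP [v /N_ok [] _ sub ->].
exact: sub.
Qed.

Lemma preserves_step2 Sprev c c' : step2 f hnil Sprev c c' -> preserves c c'.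
Proof.
case=> bsM [bsL [NM [NL [_ _ _ [NM_ok NL_ok] ->]]]]; apply: preserves_sends => m.
by rewrite mem_cat => /orP[] /mapP [b bs ->]; [case: (NM_ok b bs) | case: (NL_ok b bs)].
Qed.

Lemma preserves_step3 txs c c' : step3 f hnil H p txs c c' -> preserves c c'.
Proof.
rewrite /step3; case: ifP => _; last by move->; apply: preserves_refl.
by case=> b [Tr [_ _ ->]]; apply: preserves_send_other => b0; apply/eqP => -[].
Qed.

Lemma preserves_step4 c c' : step4 f hnil H p c c' -> preserves c c'.
Proof.
case=> [[b [[vb _ _ _] nt_none _ ->]]|[_ ->]]; last exact: preserves_refl.
exact: preserves_vote.
Qed.

Lemma preserves_step5 t c c' : step5 Delta p t c c' -> preserves c c'.
Proof.
by rewrite /step5; case: ifP => _ ->; [apply: preserves_nullify | apply: preserves_refl].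
Qed.

Lemma preserves_step6 t c c' : step6 f t c c' -> preserves c c'.
Proof.
by rewrite /step6; case: ifP => _ ->; [apply: preserves_advance | apply: preserves_refl].
Qed.

Lemma preserves_step7 t c c' : step7 f hnil p t c c' -> preserves c c'.
Proof.
case=> [[b [_ vb ->]]|[_ ->]]; last exact: preserves_refl.
case: ifP => [/andP[/eqP nt_none _]|_].
  exact: preserves_vote_advance.
exact: preserves_advance.
Qed.

Lemma preserves_step8 c c' : step8 f p c c' -> preserves c c'.
Proof.
by rewrite /step8; case: ifP => _ ->; [apply: preserves_nullify | apply: preserves_refl].
Qed.

Lemma preserves_timeslot t Sprev txs c c' :
  timeslot f Delta hnil H p t Sprev txs c c' -> preserves c c'.
Proof.
case=> c1 [c2 [c3 [c4 [c5 [c6 [c7 [[s1 s2 s3 s4] [s5 s6 s7 s8]]]]]]]].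
apply: (preserves_trans (preserves_step1 s1)).
apply: (preserves_trans (preserves_step2 s2)).
apply: (preserves_trans (preserves_step3 s3)).
apply: (preserves_trans (preserves_step4 s4)).
apply: (preserves_trans (preserves_step5 s5)).
apply: (preserves_trans (preserves_step6 s6)).
apply: (preserves_trans (preserves_step7 s7)).
exact: preserves_step8 s8.
Qed.

End OwnVotes.

Section Execution.
Variables (n f Delta : nat) (Tx Hash : eqType) (hnil : Hash).
Variable H : block Tx Hash -> Hash.
Variable E : execution n Tx Hash.
Hypothesis E_minimmit : minimmit_execution f Delta hnil H E.

Lemma mem_inboxP (p : 'I_n) t x : x \in inbox E p t ->
  exists q t0 m, [/\ t0 < t, m \in out E q p t0 & x \in m].
Proof.
move=> /flattenP [_ /mapP [q _ ->]] /flattenP [_ /mapP [t0 t0t ->]].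
move=> /flattenP [_ /mapP [m mout ->]] xm.
move: t0t mout; rewrite mem_iota add0n mem_filter => /andP[_ t0t] /andP[_ mout].
by exists q, t0, m.
Qed.

Section CorrectProcessor.
Variable p : 'I_n.
Hypothesis p_correct : correct E p.

Lemma correct_prev_state_inv t :
  own_votes_inv p (prev_state E p t) /\
  forall r t0 m, t0 < t -> m \in out E p r t0 -> {subset m <= lS (prev_state E p t)}.
Proof.
have [_ follows _ unforgeable _] := E_minimmit.
elim: t => [|t [inv_prev sent_prev]]; first by split.
have inbox_votes b :
    (p, PVote b) \in inbox E p t -> (p, PVote b) \in lS (prev_state E p t).
  (* Signatures of [p] cannot be forged: such a vote was sent by [p] earlier. *)
  move=> /mem_inboxP [q [t0 [m [t0t mout xm]]]].
  have [r [t' [m' [t't m'out xm']]]] := unforgeable _ _ _ _ _ mout xm p_correct.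
  exact: sent_prev r t' m' (leq_ltn_trans t't t0t) m'out _ xm'.
have [ob [slot out_ob]] := follows p t p_correct.
have start_inv : config_inv p (start_state E p t, [::]).
  by split=> //; apply: own_votes_inv_cat.
have [[inv_st ob_sub] grows] := preserves_timeslot slot start_inv.
split=> // r t0 m; rewrite ltnS leq_eqVlt => /orP[/eqP->|t0t].
  by rewrite out_ob => /ob_sub.
move=> /(sent_prev r t0 m t0t) sub x /sub xS; apply: grows.
by rewrite /= mem_cat xS.
Qed.

Lemma correct_vote_recorded b : sends_vote E p b ->
  exists t0, forall t, t0 < t -> (p, PVote b) \in lS (prev_state E p t).
Proof.
case=> r [t0 [m [mout vm]]]; exists t0 => t t0t.
by have [_ sent] := correct_prev_state_inv t; apply: sent mout _ vm.
Qed.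

Lemma correct_vote_view_gt0 b : sends_vote E p b -> 0 < bview b.
Proof.
case/correct_vote_recorded=> t0 recorded.
have [[_ votes_view _] _] := correct_prev_state_inv t0.+1.
by have [] := votes_view b (recorded _ (ltnSn _)).
Qed.

Lemma correct_votes_unique b1 b2 : sends_vote E p b1 -> sends_vote E p b2 ->
  bview b1 = bview b2 -> b1 = b2.
Proof.
case/correct_vote_recorded=> t1 rec1 /correct_vote_recorded [t2 rec2].
have [[_ _ votes_uniq] _] := correct_prev_state_inv (maxn t1 t2).+1.
by apply: votes_uniq; [apply: rec1 | apply: rec2]; rewrite ltnS ?leq_maxl ?leq_maxr.
Qed.

End CorrectProcessor.

Lemma correct_in_quorum (A : {set 'I_n}) :
  f < #|A| -> exists2 q, q \in A & correct E q.
Proof.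
have [few_faulty _ _ _ _] := E_minimmit.
move=> /(leq_ltn_trans few_faulty) /card_gt_exists_notin [q qA].
by rewrite inE negbK; exists q.
Qed.

Lemma receives_M_view_gt0 b :
  receives_M f hnil E b -> b != genesis Tx hnil -> 0 < bview b.
Proof.
case=> [-> /eqP //|[A [A_big A_votes]] _].
have [q qA q_correct] : exists2 q, q \in A & correct E q.
  by apply: correct_in_quorum; lia.
exact: (correct_vote_view_gt0 q_correct (A_votes q qA)).
Qed.

Lemma receives_L_M_common_voter b b' : f <= n ->
  receives_L f hnil E b -> receives_M f hnil E b' ->
  b != genesis Tx hnil -> b' != genesis Tx hnil ->
  exists2 q, correct E q & sends_vote E q b /\ sends_vote E q b'.
Proof.
move=> fn b_L b'_M + b'_ng; case: b_L => [-> /eqP //|[A [A_big A_votes]] _].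
case: b'_M b'_ng => [-> /eqP //|[A' [A'_big A'_votes]] _].
have [|q] := correct_in_quorum (A := A :&: A').
  by apply: card_setI_gt; rewrite card_ord; lia.
rewrite inE => /andP[qA qA'] q_correct.
by exists q => //; split; [apply: A_votes | apply: A'_votes].
Qed.

End Execution.

Lemma receives_L_M n f (Tx Hash : eqType) (hnil : Hash) (E : execution n Tx Hash) b :
  3 * f + 1 <= n -> receives_L f hnil E b -> receives_M f hnil E b.
Proof.
by move=> nf [|[A [A_big A_votes]]]; [left | right; exists A; split=> //; lia].
Qed.

Theorem lemma2 (n f Delta : nat) (Tx Hash : eqType) (hnil : Hash)
    (H : block Tx Hash -> Hash) (E : execution n Tx Hash) :
  5 * f + 1 <= n ->
  minimmit_execution f Delta hnil H E ->
  forall b b' : block Tx Hash,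
    receives_L f hnil E b ->
    b' <> b -> bview b' = bview b ->
    ~ receives_M f hnil E b'.
Proof.
move=> nf E_minimmit b b' b_L b'_neq_b same_view b'_M.
have b_M : receives_M f hnil E b by apply: receives_L_M b_L; lia.
have [b_gen|b_ng] := eqVneq b (genesis Tx hnil).
  have b'_ng : b' != genesis Tx hnil by apply/eqP; rewrite -b_gen.
  by have := receives_M_view_gt0 E_minimmit b'_M b'_ng; rewrite same_view b_gen.
have [b'_gen|b'_ng] := eqVneq b' (genesis Tx hnil).
  by have := receives_M_view_gt0 E_minimmit b_M b_ng; rewrite -same_view b'_gen.
have [|q q_correct [votes_b votes_b']] :=
  receives_L_M_common_voter E_minimmit _ b_L b'_M b_ng b'_ng; first by lia.
by apply: b'_neq_b; apply: (correct_votes_unique E_minimmit q_correct).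
Qed.
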